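(* Let $Y$ be a finite poset with a unique maximal node, let $(S,M)$ be a reduced quasi-excellent local ring containing $\mathbb Q$ with $|S|=|S/M|=c$, and let $\Psi:Y\to\operatorname{Spec}(S)$ be a saturated embedding that is coheight-preserving along $\operatorname{Min}(S)$. Then $\dim(Y)=\dim(S)$.
   Context: $c$ is the cardinality of $\mathbb R$. $\dim$ of a poset = supremum of lengths of finite chains (length = number of elements minus one); $x^{\uparrow}_Y=\{z\in Y:x\le z\}$. A saturated embedding $f$ satisfies $x\le y\iff f(x)\le f(y)$ and $x<_cy\Rightarrow f(x)<_cf(y)$, where $x<_cy$ means $x<y$ with nothing strictly between. $\operatorname{Spec}(S)$ is ordered by inclusion. $\Psi$ is coheight-preserving along $\operatorname{Min}(S)$ if for every minimal prime $P$ of $S$ there is $x\in Y$ with $\Psi(x)=P$ and $\dim(S/P)=\dim(x^{\uparrow}_Y)$. *)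

From HB Require Import structures.
From mathcomp Require Import all_boot all_order all_algebra.
From Stdlib Require Rdefinitions.
Set Implicit Arguments. Unset Strict Implicit. Unset Printing Implicit Defensive.
Import Order.TTheory GRing.Theory.
Local Open Scope ring_scope.

Section Ideals.
Variable S : comNzRingType.

Definition subI (I J : S -> Prop) := forall x, I x -> J x.
Definition sameI (I J : S -> Prop) := forall x, I x <-> J x.

Definition ideal (I : S -> Prop) : Prop :=
  [/\ I 0, (forall x y, I x -> I y -> I (x + y)) &
      (forall a x, I x -> I (a * x))].

Definition proper_ideal (I : S -> Prop) := ideal I /\ ~ I 1.

Definition prime_ideal (P : S -> Prop) : Prop :=
  proper_ideal P /\ (forall a b, P (a * b) -> P a \/ P b).

Definition local_ring (M : S -> Prop) : Prop :=
  proper_ideal M /\ (forall I, proper_ideal I -> subI I M).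

Definition noetherian_ring : Prop :=
  forall I : nat -> S -> Prop, (forall n, ideal (I n)) ->
    (forall n, subI (I n) (I n.+1)) ->
    exists N, forall n, (N <= n)%N -> subI (I n) (I N).

Definition reduced_ring : Prop := forall (x : S) (n : nat), x ^+ n = 0 -> x = 0.

Definition contains_Q : Prop := inhabited {rmorphism rat -> S}.

Definition Spec := {P : S -> Prop | prime_ideal P}.
Definition spec_le (P Q : Spec) := subI (sval P) (sval Q).
Definition spec_lt (P Q : Spec) := spec_le P Q /\ ~ spec_le Q P.

Definition minimal_prime (P : Spec) : Prop := forall Q : Spec, ~ spec_lt Q P.
End Ideals.

Definition continuum := Rdefinitions.R.

Definition card_c (T : Type) : Prop :=
  exists f : T -> continuum, bijective f.

(* |S/M| = c : the quotient S/M (classes of x ~ y iff x - y in M) is in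
   bijection with the reals. *)
Definition residue_card_c (S : comNzRingType) (M : S -> Prop) : Prop :=
  exists f : S -> continuum,
    (forall r, exists x, f x = r) /\ (forall x y, f x = f y <-> M (x - y)).

(* A chain in A for the strict order lt: a sequence of elements of A, each
   strictly below the next. Its length is (number of elements) - 1. *)
Fixpoint chain_in (T : Type) (A : T -> Prop) (lt : T -> T -> Prop) (s : seq T)
  : Prop :=
  match s with
  | [::] => True
  | x :: s' =>
      A x /\ chain_in A lt s' /\
      (match s' with [::] => True | y :: _ => lt x y end)
  end.

Definition is_dim (T : Type) (A : T -> Prop) (lt : T -> T -> Prop) (d : nat)
  : Prop :=
  (exists s, chain_in A lt s /\ size s = d.+1) /\
  (forall s, chain_in A lt s -> (size s <= d.+1)%N).

(* Equality of dimensions in N u {oo}: the two suprema agree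
   (both infinite, or both equal to the same d). *)
Definition same_dim (T1 T2 : Type) (A1 : T1 -> Prop) (lt1 : T1 -> T1 -> Prop)
  (A2 : T2 -> Prop) (lt2 : T2 -> T2 -> Prop) : Prop :=
  forall d, is_dim A1 lt1 d <-> is_dim A2 lt2 d.

Section Posets.
Variables (disp : Order.disp_t) (Y : finPOrderType disp).

Definition maximal_node (m : Y) : Prop := forall z : Y, (m <= z)%O -> z = m.
Definition unique_maximal : Prop :=
  exists m, maximal_node m /\ forall m', maximal_node m' -> m' = m.

Definition up_set (x : Y) : Y -> Prop := fun z => (x <= z)%O.

Definition covers_Y (x y : Y) : Prop :=
  (x < y)%O /\ ~ (exists z, (x < z)%O /\ (z < y)%O).

Variable S : comNzRingType.

Definition covers_spec (P Q : Spec S) : Prop :=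
  spec_lt P Q /\ ~ (exists R, spec_lt P R /\ spec_lt R Q).

Definition saturated_embedding (Psi : Y -> Spec S) : Prop :=
  (forall x y : Y, (x <= y)%O <-> spec_le (Psi x) (Psi y)) /\
  (forall x y : Y, covers_Y x y -> covers_spec (Psi x) (Psi y)).

(* dim(S/P) = Krull dimension of S/P = dim of the poset of primes containing P *)
Definition coheight_preserving_min (Psi : Y -> Spec S) : Prop :=
  forall P : Spec S, minimal_prime P ->
    exists x : Y, sameI (sval (Psi x)) (sval P) /\
      same_dim (fun Q : Spec S => spec_le P Q) (@spec_lt S)
               (up_set x) (fun a b : Y => (a < b)%O).
End Posets.

From mathcomp Require Import all_boot all_order all_algebra.
From mathcomp Require Import boolp classical_sets.
Set Implicit Arguments. Unset Strict Implicit. Unset Printing Implicit Defensive.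
Import Order.TTheory.

(* Only the order-theoretic hypotheses matter. Since Psi is an order
   embedding, every chain of Y maps to a chain of Spec(S) of the same length,
   so dim(S) >= dim(Y). Conversely, a chain of primes Q_0 < ... < Q_n lies
   above some minimal prime P contained in Q_0 (Zorn), hence n <= dim(S/P);
   coheight preservation gives dim(S/P) = dim(x^up) <= dim(Y) for the node x
   with Psi(x) = P. As Y is finite and nonempty, dim(Y) is a natural number. *)

Section Chains.
Variables (T : Type) (lt : T -> T -> Prop).

Lemma chain_in_sub (A B : T -> Prop) s :
  (forall a, A a -> B a) -> chain_in A lt s -> chain_in B lt s.
Proof.
move=> AB; elim: s => //= x s IH [Ax [Cs Hx]].
by split; [exact: AB | split; [exact: IH |]].
Qed.

Lemma chain_in_up (A B : T -> Prop) x s :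
  (forall a b, lt a b -> B a -> B b) -> B x ->
  chain_in A lt (x :: s) -> chain_in B lt (x :: s).
Proof.
move=> Bup; elim: s x => [|y s IH] x Bx /= [_ [Cs Hxy]] //.
by split=> //; split=> //; apply: IH => //; exact: Bup Hxy Bx.
Qed.

Lemma chain_in_map (T' : Type) (lt' : T' -> T' -> Prop) (f : T -> T')
    (A : T -> Prop) (A' : T' -> Prop) s :
  (forall a, A a -> A' (f a)) -> (forall a b, lt a b -> lt' (f a) (f b)) ->
  chain_in A lt s -> chain_in A' lt' (map f s).
Proof.
move=> fA flt; elim: s => //= x s IH [Ax [Cs Hx]].
split; first exact: fA.
by split; [exact: IH | case: s Hx {IH Cs} => //= y s /flt].
Qed.

Lemma is_dim_uniq (A : T -> Prop) d e : is_dim A lt d -> is_dim A lt e -> d = e.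
Proof.
move=> [[s [Cs Ss]] Hd] [[t [Ct St]] He].
have := Hd _ Ct; have := He _ Cs; rewrite Ss St !ltnS => de ed.
by apply/eqP; rewrite eqn_leq de ed.
Qed.

Lemma is_dim_le (A B : T -> Prop) d e :
  (forall a, A a -> B a) -> is_dim A lt d -> is_dim B lt e -> (d <= e)%N.
Proof.
move=> AB [[s [Cs Ss]] _] [_ He].
by rewrite -ltnS -Ss; apply: He; exact: chain_in_sub Cs.
Qed.

Lemma is_dim_exists (A : T -> Prop) n :
  (exists x, A x) -> (forall s, chain_in A lt s -> (size s <= n)%N) ->
  exists d, is_dim A lt d.
Proof.
move=> [x Ax] Hn.
pose P k := `[< exists s, chain_in A lt s /\ size s = k.+1 >].
have P0 : exists k, P k by exists 0; apply/asboolP; exists [:: x].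
have Pn k : P k -> (k <= n)%N.
  by move=> /asboolP [s [/Hn + Ss]]; rewrite Ss; exact: ltnW.
case: (ex_maxnP P0 Pn) => d /asboolP chain_d d_max.
exists d; split=> // -[|y s] Cs //=.
by rewrite ltnS; apply: d_max; apply/asboolP; exists (y :: s).
Qed.

End Chains.

Lemma same_dim_is_dim (T1 T2 : Type) (A1 : T1 -> Prop) (lt1 : T1 -> T1 -> Prop)
    (A2 : T2 -> Prop) (lt2 : T2 -> T2 -> Prop) d :
  is_dim A1 lt1 d -> is_dim A2 lt2 d -> same_dim A1 lt1 A2 lt2.
Proof.
by move=> d1 d2 e; split=> He; [rewrite (is_dim_uniq He d1) | rewrite (is_dim_uniq He d2)].
Qed.

Section FinitePoset.
Variables (disp : Order.disp_t) (Y : finPOrderType disp).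

Lemma chain_in_size_card (A : Y -> Prop) s :
  chain_in A (fun a b : Y => (a < b)%O) s -> (size s <= #|Y|)%N.
Proof.
have sorted_s : chain_in A (fun a b : Y => (a < b)%O) s -> sorted <%O s.
  elim: s => //= x s IH [_ [Cs Hx]]; move: (IH Cs).
  by case: s Hx {IH Cs} => //= y s -> ->.
move=> /sorted_s /(sorted_uniq lt_trans ltxx) s_uniq.
by rewrite -(card_uniqP s_uniq) max_card.
Qed.

Lemma is_dim_finPOrder (A : Y -> Prop) :
  (exists x, A x) -> exists d, is_dim A (fun a b : Y => (a < b)%O) d.
Proof. by move=> A0; apply: is_dim_exists A0 (@chain_in_size_card A). Qed.

End FinitePoset.

Section MinimalPrimes.
Variable S : comNzRingType.

Lemma prime_ideal_bigcap (C : Spec S -> Prop) :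
  (exists P, C P) -> (forall P Q, C P -> C Q -> spec_le P Q \/ spec_le Q P) ->
  prime_ideal (fun z => forall P, C P -> sval P z).
Proof.
move=> [P0 CP0] Ctot.
split; [split; [split|] |].
- by move=> P _; case: (svalP P) => [[[]]] //.
- by move=> x y Ix Iy P CP; case: (svalP P) => [[[_ + _] _] _]; apply; [exact: Ix|exact: Iy].
- by move=> a x Ix P CP; case: (svalP P) => [[[_ _ +] _] _]; apply; exact: Ix.
- by move=> I1; case: (svalP P0) => [[_ +] _]; apply; exact: I1.
- move=> x y Ixy.
  have [Ix|/existsNP [P /not_implyP [CP nPx]]] := pselect (forall P, C P -> sval P x).
    by left.
  right=> Q CQ.
  case: ((svalP Q).2 _ _ (Ixy Q CQ)) => // Qx.
  case: (Ctot _ _ CP CQ) => [PQ|QP]; last by case: nPx; exact: QP.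
  by case: ((svalP P).2 _ _ (Ixy P CP)) => // /PQ.
Qed.

Lemma exists_minimal_prime (Q : Spec S) :
  exists P : Spec S, minimal_prime P /\ spec_le P Q.
Proof.
pose below := {P : Spec S | spec_le P Q}.
pose R (P P' : below) := `[< spec_le (sval P') (sval P) >].
have [| | |P Pmax] := @ZL_preorder below (exist _ Q (fun _ => id)) R.
- by move=> P; apply/asboolP.
- by move=> ? ? ? /asboolP le1 /asboolP le2; apply/asboolP => z /le2 /le1.
- move=> Ch Chtot.
  have [[P0 ChP0]|Ch0] := pselect (exists P, Ch P); last first.
    by exists (exist _ Q (fun _ => id)) => P ChP; case: Ch0; exists P.
  pose C P' := exists2 P, Ch P & sval P = P'.
  have C0 : exists P, C P by exists (sval P0); exists P0.
  have Ctot P P' : C P -> C P' -> spec_le P P' \/ spec_le P' P.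
    move=> [{}P ChP <-] [{}P' ChP' <-].
    by case: (Chtot _ _ ChP ChP') => /asboolP; [right|left].
  have I_prime := prime_ideal_bigcap C0 Ctot.
  have IQ : spec_le (exist _ _ I_prime) Q.
    by move=> z Iz; apply: (svalP P0); apply: Iz; exists P0.
  by exists (exist _ (exist _ _ I_prime) IQ) => P ChP; apply/asboolP => z Iz; apply: Iz; exists P.
- exists (sval P); split; last exact: (svalP P).
  move=> P' [P'P nPP'].
  have P'Q : spec_le P' Q by move=> z /P'P; exact: (svalP P).
  by case: nPP'; apply/asboolP/(Pmax (exist _ P' P'Q)); apply/asboolP.
Qed.

End MinimalPrimes.

Section SaturatedEmbedding.
Variables (disp : Order.disp_t) (Y : finPOrderType disp) (S : comNzRingType).
Variable Psi : Y -> Spec S.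

Lemma chain_in_order_embedding (A : Y -> Prop) s :
  (forall x y : Y, (x <= y)%O <-> spec_le (Psi x) (Psi y)) ->
  chain_in A (fun a b : Y => (a < b)%O) s ->
  chain_in (fun _ => True) (@spec_lt S) (map Psi s).
Proof.
move=> Psi_le; apply: chain_in_map => // a b ab; split; first exact/Psi_le/ltW.
by move=> /Psi_le ba; move: (lt_le_trans ab ba); rewrite ltxx.
Qed.

Lemma chain_in_Spec_size_le dY s :
  coheight_preserving_min Psi ->
  is_dim (fun _ : Y => True) (fun a b : Y => (a < b)%O) dY ->
  chain_in (fun _ => True) (@spec_lt S) s -> (size s <= dY.+1)%N.
Proof.
move=> Psi_coh dimY; case: s => [|Q s] // Cs.
have [P [P_min PQ]] := exists_minimal_prime Q.
have [x [_ dimSP_dimx]] := Psi_coh P P_min.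
have [d dimx] := is_dim_finPOrder (ex_intro (up_set x) x (lexx x)).
have CP : chain_in (spec_le P) (@spec_lt S) (Q :: s).
  by apply: chain_in_up Cs => // a b [ab _] Pa z /Pa /ab.
apply: leq_trans (((dimSP_dimx d).2 dimx).2 _ CP) _.
by rewrite ltnS; apply: is_dim_le dimx dimY.
Qed.

Lemma is_dim_Spec dY :
  saturated_embedding Psi -> coheight_preserving_min Psi ->
  is_dim (fun _ : Y => True) (fun a b : Y => (a < b)%O) dY ->
  is_dim (fun _ => True) (@spec_lt S) dY.
Proof.
move=> [Psi_le _] Psi_coh dimY; split; last by move=> s; exact: chain_in_Spec_size_le.
have [[s [Cs Ss]] _] := dimY.
by exists (map Psi s); rewrite size_map; split=> //; exact: chain_in_order_embedding Cs.
Qed.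

End SaturatedEmbedding.

Theorem mainTheorem9 (disp : Order.disp_t) (Y : finPOrderType disp)
  (S : comNzRingType) (M : S -> Prop) (Psi : Y -> Spec S) :
  unique_maximal Y ->
  local_ring M -> noetherian_ring S -> reduced_ring S -> contains_Q S ->
  card_c S -> residue_card_c M ->
  saturated_embedding Psi -> coheight_preserving_min Psi ->
  same_dim (fun _ : Y => True) (fun a b : Y => (a < b)%O)
           (fun _ : Spec S => True) (@spec_lt S).
Proof.
move=> [m _] _ _ _ _ _ _ Psi_sat Psi_coh.
have [dY dimY] := is_dim_finPOrder (ex_intro (fun _ : Y => True) m I).
exact: same_dim_is_dim dimY (is_dim_Spec Psi_sat Psi_coh dimY).
Qed.
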